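(* Let $\mathcal{F}$ be the class of multiplicative functions $f$ from the positive integers to the nonnegative integers such that $f(p^{k-1})\le f(p^k)$ for every prime $p$ and every integer $k\ge 1$. The set of real numbers $\delta$ for which there exists $f\in\mathcal{F}$ such that the set of $f$-practical numbers has asymptotic density $\delta$ is dense in $[0,1]$.
   Context: A function $f$ is multiplicative if $f(1)=1$ and $f(ab)=f(a)f(b)$ whenever $\gcd(a,b)=1$. For such $f$ put $S_f(n)=\sum_{d\mid n} f(d)$. A positive integer $n$ is called $f$-practical if for every positive integer $m\le S_f(n)$ there is a set $\mathcal{D}$ of (distinct) positive divisors of $n$ with $m=\sum_{d\in\mathcal{D}} f(d)$. *)

From HB Require Import structures.
From mathcomp Require Import all_boot all_order all_algebra.
From mathcomp Require Import boolp classical_sets reals topology normedtype sequences.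
Set Implicit Arguments. Unset Strict Implicit. Unset Printing Implicit Defensive.
Import Order.TTheory GRing.Theory Num.Theory.
Import numFieldNormedType.Exports.
Local Open Scope classical_set_scope.

(* f is multiplicative (as a function on positive integers; f 0 is irrelevant). *)
Definition multiplicative (f : nat -> nat) : Prop :=
  f 1 = 1 /\
  forall a b : nat, 0 < a -> 0 < b -> coprime a b -> f (a * b) = f a * f b.

Definition in_classF (f : nat -> nat) : Prop :=
  multiplicative f /\
  forall p k : nat, prime p -> 1 <= k -> f (p ^ (k - 1)) <= f (p ^ k).

Definition S_f (f : nat -> nat) (n : nat) : nat := \sum_(d <- divisors n) f d.

Definition f_practical (f : nat -> nat) (n : nat) : Prop :=
  0 < n /\
  forall m : nat, 1 <= m <= S_f f n ->
    exists D : seq nat, [/\ uniq D, {subset D <= divisors n} & m = \sum_(d <- D) f d].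

(* number of f-practical n with 1 <= n <= N *)
Definition count_fpractical (f : nat -> nat) (N : nat) : nat :=
  #|[set n : 'I_N.+1 | `[< f_practical f n >] ]%SET|.

Definition has_fpractical_density (R : realType) (f : nat -> nat) (delta : R) : Prop :=
  (fun N : nat => ((count_fpractical f N)%:R / N%:R : R)%R) @ \oo --> delta.

From Pilot Require Import Defs.
From HB Require Import structures.
From mathcomp Require Import all_boot all_order all_algebra.
From mathcomp Require Import boolp classical_sets reals topology normedtype sequences.
From mathcomp Require Import ring lra.
Import Order.TTheory GRing.Theory Num.Theory.
Import numFieldNormedType.Exports.

Set Implicit Arguments. Unset Strict Implicit. Unset Printing Implicit Defensive.

(* For a finite set P of primes with product Q, let fQ Q n = 3 ^ (number of prime
   factors of n outside P); it lies in the class F. If n > 1 is coprime to Q, every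
   divisor d > 1 of n has fQ Q d >= 3, so 2 is not a sum of values fQ Q d and n is not
   fQ Q-practical. If some q in P divides n, the divisors 1, q, ..., q^a already give
   every value up to a + 1 >= 2, and multiplying in a further prime power p^b, whose
   value is at most 3, keeps the subset sums gap-free; so n is fQ Q-practical. Hence the
   fQ Q-practical numbers have density 1 - phi(Q)/Q = 1 - prod_(p in P) (1 - 1/p).
   For P the primes in (K, K + i] with 1/K < e these products start at 1, tend to 0
   as i grows (because prod_(p <= M) (1 - 1/p) <= 1 / (1 + 1/2 + ... + 1/M)), and
   decrease in steps smaller than e, so one of them is e-close to 1 - x. *)

Definition fQ (Q n : nat) : nat := 3 ^ count (fun p => ~~ (p %| Q)) (primes n).

Lemma fQ1 Q : fQ Q 1 = 1.
Proof. by []. Qed.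

Lemma fQ_gt0 Q n : 0 < fQ Q n.
Proof. by rewrite expn_gt0. Qed.

(* Qualified: plain [multiplicative] resolves to a deprecated ssralg notation. *)
Lemma fQ_multiplicative Q : Defs.multiplicative (fQ Q).
Proof.
split=> // a b a_gt0 b_gt0 co_ab; rewrite /fQ -expnD -count_cat.
have /permP -> // : perm_eq (primes (a * b)) (primes a ++ primes b).
apply: uniq_perm => [||p]; first exact: primes_uniq.
  by rewrite cat_uniq !primes_uniq -coprime_has_primes // co_ab.
by rewrite mem_cat primesM.
Qed.

Lemma fQ_ppow Q p k : 0 < k -> fQ Q (p ^ k) = fQ Q p.
Proof. by move=> k_gt0; rewrite /fQ primesX. Qed.

Lemma fQ_prime Q p : prime p -> fQ Q p = if p %| Q then 1 else 3.
Proof. by move=> p_pr; rewrite /fQ primes_prime //=; case: (p %| Q). Qed.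

Lemma fQ_ppow_le3 Q p k : prime p -> fQ Q (p ^ k) <= 3.
Proof.
move=> p_pr; case: k => [|k]; first by rewrite fQ1.
by rewrite fQ_ppow // fQ_prime //; case: (p %| Q).
Qed.

Lemma fQ_in_classF Q : in_classF (fQ Q).
Proof.
split=> [|p [//|[|k]] p_pr _]; first exact: fQ_multiplicative.
  by rewrite fQ1 fQ_gt0.
by rewrite subSS subn0 !fQ_ppow.
Qed.

Lemma fQ_coprime_ge3 Q d : 1 < d -> coprime d Q -> 3 <= fQ Q d.
Proof.
move=> d_gt1 co_dQ; have p_pr := pdiv_prime d_gt1.
have pQ : ~~ (pdiv d %| Q).
  by rewrite -prime_coprime // (coprime_dvdl (pdiv_dvd d)).
have : 0 < count (fun p => ~~ (p %| Q)) (primes d).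
  by rewrite -has_count; apply/hasP; exists (pdiv d); rewrite // mem_primes p_pr ltnW ?pdiv_dvd.
by rewrite /fQ; case: count => // k _; rewrite expnS leq_pmulr ?expn_gt0.
Qed.

Definition subsum_complete (f : nat -> nat) (L : seq nat) : Prop :=
  forall m, m <= \sum_(d <- L) f d ->
    exists2 b : bitseq, size b = size L & m = \sum_(d <- mask b L) f d.

Lemma subsum_complete1 f : f 1 = 1 -> subsum_complete f [:: 1].
Proof.
move=> f1 m; rewrite big_seq1 f1; case: m => [|[|//]] _.
  by exists [:: false]; rewrite // big_nil.
by exists [:: true]; rewrite //= big_seq1.
Qed.

(* Write m = x + c * y with x, y subsums of L1, L2: either y is the whole sum of L2,
   or y = m %/ c and x = m %% c < c <= (sum of L1) + 1. *)
Lemma subsum_complete_cat f L1 L2 g c :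
  subsum_complete f L1 -> subsum_complete f L2 ->
  {in L2, forall d, f (g d) = c * f d} -> c <= (\sum_(d <- L1) f d).+1 ->
  subsum_complete f (L1 ++ map g L2).
Proof.
move=> C1 C2 fg c_le.
have sum_map L : {subset L <= L2} -> \sum_(d <- map g L) f d = c * \sum_(d <- L) f d.
  by move=> sL; rewrite big_map big_distrr; apply: eq_big_seq => d /sL/fg.
move=> m; rewrite big_cat sum_map //.
set s := \sum_(d <- L1) f d in c_le *; set t := \sum_(d <- L2) f d => m_le.
have [x [y [x_le y_le ->]]] : exists x y, [/\ x <= s, y <= t & m = x + c * y].
  have [c0 | c_gt0] := posnP c.
    by exists m, 0; rewrite muln0 addn0; split=> //; rewrite -[s]addn0 -(mul0n t) -c0.
  have [t_le | lt_t] := leqP t (m %/ c).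
    have ct_le : c * t <= m by rewrite (leq_trans _ (leq_divM m c)) // mulnC leq_mul2r t_le orbT.
    by exists (m - c * t), t; split; rewrite ?subnK // leq_subLR addnC.
  exists (m %% c), (m %/ c); split; last by rewrite addnC mulnC -divn_eq.
    by rewrite -ltnS (leq_trans _ c_le) // ltn_mod.
  exact: ltnW.
have [b1 sz1 ->] := C1 x x_le; have [b2 sz2 ->] := C2 y y_le.
exists (b1 ++ b2); first by rewrite !size_cat sz1 sz2 size_map.
by rewrite mask_cat ?size_map // -map_mask big_cat sum_map // => d /mem_mask.
Qed.

Lemma f_practical_of_subsum_complete f n L :
  0 < n -> perm_eq L (divisors n) -> subsum_complete f L -> f_practical f n.
Proof.
move=> n_gt0 L_perm C; split=> // m /andP [_ m_le].
have sumL : S_f f n = \sum_(d <- L) f d by apply/perm_big; rewrite perm_sym.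
have [b _ ->] := C m (leq_trans m_le (eq_leq sumL)).
exists (mask b L); split => //; first by rewrite mask_uniq // (perm_uniq L_perm) divisors_uniq.
by move=> d /mem_mask; rewrite (perm_mem L_perm).
Qed.

Definition ppow_mul_seq (p b : nat) (L : seq nat) : seq nat :=
  [seq p ^ i * d | i <- iota 0 b.+1, d <- L].

Lemma ppow_mul_seq0 p L : ppow_mul_seq p 0 L = L.
Proof. by rewrite /ppow_mul_seq /= cats0 -[RHS]map_id; apply: eq_map => d; rewrite mul1n. Qed.

Lemma ppow_mul_seqS p b L :
  ppow_mul_seq p b.+1 L = ppow_mul_seq p b L ++ map (muln (p ^ b.+1)) L.
Proof. by rewrite /ppow_mul_seq -addn1 iotaD allpairs_cat /= cats0. Qed.

Lemma prime_coprime_gt0 p d : prime p -> coprime p d -> 0 < d.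
Proof. by case: d => // p_pr; rewrite /coprime gcdn0 => /eqP p1; rewrite p1 in p_pr. Qed.

Lemma logn_ppow_mul p i d : prime p -> coprime p d -> logn p (p ^ i * d) = i.
Proof. by move=> p_pr co_pd; rewrite mulnC logn_Gauss // pfactorK. Qed.

Lemma ppow_mul_seq_uniq p b L :
  prime p -> {in L, forall d, coprime p d} -> uniq L -> uniq (ppow_mul_seq p b L).
Proof.
move=> p_pr co_pL uL; apply: allpairs_uniq; rewrite ?iota_uniq //.
move=> [i1 d1] [i2 d2] /allpairsP [[j1 e1] [_ e1L [-> ->]]].
move=> /allpairsP [[j2 e2] [_ e2L [-> ->]]] /= eq_prod.
have eq_i : j1 = j2.
  by rewrite -(logn_ppow_mul j1 p_pr (co_pL _ e1L)) eq_prod logn_ppow_mul ?co_pL.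
move: eq_prod; rewrite eq_i => /eqP; rewrite eqn_pmul2l ?expn_gt0 ?prime_gt0 //.
by move=> /eqP ->.
Qed.

Lemma perm_ppow_mul_seq_divisors p b n L :
  prime p -> coprime p n -> perm_eq L (divisors n) ->
  perm_eq (ppow_mul_seq p b L) (divisors (p ^ b * n)).
Proof.
move=> p_pr co_pn L_perm; have n_gt0 := prime_coprime_gt0 p_pr co_pn.
have L_div := perm_mem L_perm.
have pbn_gt0 : 0 < p ^ b * n by rewrite muln_gt0 expn_gt0 prime_gt0.
apply: uniq_perm; rewrite ?divisors_uniq //.
  apply: ppow_mul_seq_uniq; rewrite ?(perm_uniq L_perm) ?divisors_uniq //.
  by move=> d; rewrite L_div -dvdn_divisors // => /coprime_dvdr; apply.
move=> d; rewrite -dvdn_divisors //.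
apply/allpairsP/idP => [[[i e] [i_in e_in ->]] | d_dvd].
  rewrite L_div -dvdn_divisors // in e_in; rewrite mem_iota in i_in.
  by rewrite dvdn_mul // dvdn_exp2l // -ltnS.
have [e co_pe d_eq] := pfactor_coprime p_pr (dvdn_gt0 pbn_gt0 d_dvd).
exists (logn p d, e); split; last by rewrite /= mulnC.
  rewrite mem_iota ltnS /= -(logn_ppow_mul b p_pr co_pn).
  exact: dvdn_leq_log pbn_gt0 d_dvd.
rewrite /= L_div -dvdn_divisors // -(@Gauss_dvdl e n (p ^ b)).
  by rewrite mulnC (dvdn_trans _ d_dvd) // d_eq dvdn_mulr.
by rewrite coprime_sym coprimeXl.
Qed.

Lemma subsum_complete_ppow_mul f p b L :
  Defs.multiplicative f -> prime p -> {in L, forall d, coprime p d} ->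
  (forall i, 0 < i <= b -> f (p ^ i) <= (\sum_(d <- L) f d).+1) ->
  subsum_complete f L -> subsum_complete f (ppow_mul_seq p b L).
Proof.
move=> [_ f_mul] p_pr co_pL f_le C.
have sum_ge b' : \sum_(d <- L) f d <= \sum_(d <- ppow_mul_seq p b' L) f d.
  elim: b' => [|b' IH]; first by rewrite ppow_mul_seq0.
  by rewrite ppow_mul_seqS big_cat (leq_trans IH) ?leq_addr.
elim: b f_le => [|b IH] f_le; first by rewrite ppow_mul_seq0.
rewrite ppow_mul_seqS; apply: (subsum_complete_cat (c := f (p ^ b.+1))) => //.
- by apply: IH => i /andP [i_gt0 i_le]; apply: f_le; rewrite i_gt0 ltnW.
- move=> d /co_pL co_pd.
  by rewrite f_mul ?expn_gt0 ?(prime_gt0 p_pr) ?coprimeXl ?(prime_coprime_gt0 p_pr co_pd).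
- by rewrite (leq_trans (f_le b.+1 _)) ?ltnS ?leqnn ?sum_ge.
Qed.

Lemma fQ_sum_divisors_ge2 Q n L :
  1 < n -> perm_eq L (divisors n) -> 2 <= \sum_(d <- L) fQ Q d.
Proof.
move=> n_gt1 L_perm; have n_gt0 := ltnW n_gt1.
apply: (@leq_trans (size L)); last first.
  by rewrite -sum1_size leq_sum // => d _; exact: fQ_gt0.
apply: (@uniq_leq_size _ [:: 1; n]); first by rewrite /= inE andbT neq_ltn n_gt1.
by move=> d; rewrite (perm_mem L_perm) !inE => /orP [] /eqP ->; rewrite ?divisor1 ?divisors_id.
Qed.

Lemma fQ_subsum_complete_ppow Q q a :
  prime q -> q %| Q -> subsum_complete (fQ Q) (ppow_mul_seq q a [:: 1]).
Proof.
move=> q_pr qQ.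
apply: (subsum_complete_ppow_mul (fQ_multiplicative Q) q_pr _ _ (subsum_complete1 (fQ1 Q))).
  by move=> d; rewrite inE => /eqP ->; exact: coprimen1.
by move=> i /andP [i_gt0 _]; rewrite fQ_ppow // fQ_prime // qQ big_seq1 fQ1.
Qed.

Lemma fQ_subsum_complete_divisors Q q a r :
  prime q -> q %| Q -> 0 < a -> coprime q r ->
  exists2 L, perm_eq L (divisors (q ^ a * r)) & subsum_complete (fQ Q) L.
Proof.
move=> q_pr qQ a_gt0; elim/ltn_ind: r => r IH co_qr.
have r_gt0 := prime_coprime_gt0 q_pr co_qr.
have [r_le1 | r_gt1] := leqP r 1.
  have -> : r = 1 by apply/eqP; rewrite eqn_leq r_le1.
  exists (ppow_mul_seq q a [:: 1]); last exact: fQ_subsum_complete_ppow.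
  exact: perm_ppow_mul_seq_divisors (coprimen1 q) _.
have p_pr : prime (pdiv r) := pdiv_prime r_gt1.
set p := pdiv r in p_pr *; have pr : p %| r := pdiv_dvd r.
have [r' co_pr' r_eq] := pfactor_coprime p_pr r_gt0; set b := logn p r in r_eq.
have r'_dvd : r' %| r by rewrite r_eq dvdn_mulr.
have r'_lt : r' < r.
  rewrite ltn_neqAle dvdn_leq // andbT.
  by apply: contraTneq pr => <-; rewrite -prime_coprime.
have r'_gt0 : 0 < r' := dvdn_gt0 r_gt0 r'_dvd.
have [L' L'_perm C'] := IH r' r'_lt (coprime_dvdr r'_dvd co_qr).
have co_p : coprime p (q ^ a * r').
  rewrite coprimeMr co_pr' andbT coprime_pexpr // prime_coprime // dvdn_prime2 //.
  by apply: contraTneq pr => ->; rewrite -prime_coprime.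
exists (ppow_mul_seq p b L').
  by rewrite r_eq mulnA mulnC; exact: perm_ppow_mul_seq_divisors.
apply: (subsum_complete_ppow_mul (fQ_multiplicative Q) p_pr _ _ C').
  move=> d; rewrite (perm_mem L'_perm) -dvdn_divisors ?muln_gt0 ?expn_gt0 ?(prime_gt0 q_pr) //.
  by move=> /coprime_dvdr; apply.
have qa_gt1 : 1 < q ^ a by rewrite -(expn0 q) ltn_exp2l ?prime_gt1.
have := fQ_sum_divisors_ge2 Q (leq_trans qa_gt1 (leq_pmulr _ r'_gt0)) L'_perm.
by move=> sum_ge2 i _; rewrite (leq_trans (fQ_ppow_le3 Q i p_pr)).
Qed.

Lemma fQ_practical_of_not_coprime Q n : 0 < n -> ~~ coprime n Q -> f_practical (fQ Q) n.
Proof.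
move=> n_gt0 not_co.
have g_gt1 : 1 < gcdn n Q by rewrite ltn_neqAle eq_sym not_co gcdn_gt0 n_gt0.
have q_pr : prime (pdiv (gcdn n Q)) := pdiv_prime g_gt1.
set q := pdiv _ in q_pr; have q_dvd : q %| gcdn n Q := pdiv_dvd _.
have [r co_qr n_eq] := pfactor_coprime q_pr n_gt0.
have a_gt0 : 0 < logn q n.
  by rewrite logn_gt0 mem_primes q_pr n_gt0 (dvdn_trans q_dvd (dvdn_gcdl _ _)).
have [L L_perm C] :=
  fQ_subsum_complete_divisors q_pr (dvdn_trans q_dvd (dvdn_gcdr _ _)) a_gt0 co_qr.
by apply: f_practical_of_subsum_complete n_gt0 _ C; rewrite n_eq mulnC.
Qed.

Lemma fQ_not_practical_of_coprime Q n : 1 < n -> coprime n Q -> ~ f_practical (fQ Q) n.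
Proof.
move=> n_gt1 co_nQ [n_gt0 practical].
have fQ_ge3 d : d \in divisors n -> d != 1 -> 3 <= fQ Q d.
  rewrite -dvdn_divisors // => d_dvd d_neq1; apply: fQ_coprime_ge3 (coprime_dvdl d_dvd co_nQ).
  by rewrite ltn_neqAle eq_sym d_neq1 (dvdn_gt0 n_gt0 d_dvd).
have two_le : 1 <= 2 <= S_f (fQ Q) n.
  rewrite /S_f (bigD1_seq n) ?divisors_id ?divisors_uniq //= (leq_trans _ (leq_addr _ _)) //.
  by rewrite (leq_trans _ (fQ_ge3 _ _ _)) ?divisors_id ?neq_ltn ?n_gt1 ?orbT.
have [D [uD D_div sum2]] := practical 2 two_le.
have D1 d : d \in D -> d = 1.
  move=> dD; apply/eqP/negP => /negP d_neq1.
  have fd_le2 : fQ Q d <= 2 by rewrite sum2 (bigD1_seq d) //= leq_addr.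
  by have := fQ_ge3 d (D_div d dD) d_neq1; rewrite leqNgt ltnS fd_le2.
have size_le1 : size D <= size [:: 1] by apply: uniq_leq_size uD _ => d /D1 ->; rewrite inE.
have sumD : \sum_(d <- D) fQ Q d = size D by rewrite -sum1_size; apply: eq_big_seq => d /D1 ->.
by move: size_le1; rewrite -sumD -sum2.
Qed.

Lemma fQ_practicalP Q n :
  reflect (f_practical (fQ Q) n) ((n == 1) || (0 < n) && ~~ coprime n Q).
Proof.
apply: (iffP idP) => [/orP [/eqP -> | /andP [n_gt0 not_co]] | practical].
- split=> // m /andP [m_gt0]; rewrite /S_f big_seq1 fQ1 => m_le1.
  by exists [:: 1]; rewrite big_seq1 fQ1; split=> //; apply/eqP; rewrite eqn_leq m_le1.
- exact: fQ_practical_of_not_coprime.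
have n_gt0 := practical.1; rewrite n_gt0 /=; have [//|n_neq1 /=] := eqVneq n 1.
apply/negP => co_nQ; apply: (fQ_not_practical_of_coprime _ co_nQ practical).
by rewrite ltn_neqAle eq_sym n_neq1.
Qed.

Definition coprime_count (Q M : nat) : nat := \sum_(n < M) coprime n Q.

Lemma coprime_count_le Q M : coprime_count Q M <= M.
Proof. by rewrite -[leqRHS]card_ord -sum1_card leq_sum // => n _; case: coprime. Qed.

Lemma coprime_countD Q m : coprime_count Q (Q + m) = totient Q + coprime_count Q m.
Proof.
rewrite /coprime_count big_split_ord /= totient_count_coprime big_mkord; congr (_ + _).
  by apply: eq_bigr => n _; rewrite coprime_sym.
by apply: eq_bigr => n _; rewrite -coprime_modl modnDl coprime_modl.
Qed.

Lemma coprime_count_periodic Q k r :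
  coprime_count Q (k * Q + r) = k * totient Q + coprime_count Q r.
Proof. by elim: k => // k IH; rewrite !mulSn -addnA coprime_countD IH addnA. Qed.

Lemma sum_ord_eqn M c : \sum_(i < M) (i == c :> nat) = (c < M).
Proof.
elim: M => [|M IH]; first by rewrite big_ord0.
by rewrite big_ord_recr /= IH ltnS; case: ltngtP.
Qed.

Lemma count_fpractical_fQ Q N :
  count_fpractical (fQ Q) N = \sum_(n < N.+1) ((n == 1 :> nat) || (0 < n) && ~~ coprime n Q).
Proof.
rewrite /count_fpractical -sum1_card big_mkcond /=; apply: eq_bigr => n _.
by rewrite inE (asbool_equiv_eqP (fQ_practicalP Q n)) //; case: ifP.
Qed.

(* Apart from n = 0 and n = 1, n is fQ Q-practical exactly when it is not coprime to Q. *)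
Lemma count_fpractical_fQ_bounds Q N :
  N <= count_fpractical (fQ Q) N + coprime_count Q N.+1 <= N.+2.
Proof.
rewrite count_fpractical_fQ /coprime_count -big_split /=.
have term_le n : ((n == 1) || (0 < n) && ~~ coprime n Q) + coprime n Q <= 1 + (n == 1).
  by case: (eqVneq n 1) => [-> | _] //=; case: (0 < n); case: coprime.
have term_ge n : 1 <= ((n == 1) || (0 < n) && ~~ coprime n Q) + coprime n Q + (n == 0).
  by case: n => [|[|n]] //=; case: coprime.
have sum_ge := @leq_sum _ (index_enum 'I_N.+1) xpredT _ _ (fun n _ => term_ge n).
have sum_le := @leq_sum _ (index_enum 'I_N.+1) xpredT _ _ (fun n _ => term_le n).
rewrite sum1_card card_ord big_split /= sum_ord_eqn addn1 ltnS in sum_ge.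
rewrite sum_ge (leq_trans sum_le) // big_split /= sum1_card card_ord sum_ord_eqn.
by case: ltnP; rewrite ?addn0 ?addn1.
Qed.

Definition primes_in (a n : nat) : seq nat := [seq p <- iota a n | prime p].

Lemma primes_in_prime a n : all prime (primes_in a n).
Proof. exact: filter_all. Qed.

Lemma primes_in_uniq a n : uniq (primes_in a n).
Proof. by rewrite filter_uniq ?iota_uniq. Qed.

Lemma primes_inD a n m : primes_in a (n + m) = primes_in a n ++ primes_in (a + n) m.
Proof. by rewrite /primes_in iotaD filter_cat. Qed.

Lemma primes_inS a n :
  primes_in a n.+1 = primes_in a n ++ (if prime (a + n) then [:: a + n] else [::]).
Proof. by rewrite -addn1 primes_inD /primes_in /=; case: prime. Qed.

Lemma prod_primes_gt0 s : all prime s -> 0 < \prod_(p <- s) p.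
Proof. by move=> s_pr; rewrite big_seq prodn_cond_gt0 // => p /(allP s_pr) /prime_gt0. Qed.

Lemma totient_prod_primes s : all prime s -> uniq s ->
  totient (\prod_(p <- s) p) = (\prod_(p <- s) p.-1)%N.
Proof.
elim: s => [|p s IH] /=; first by rewrite !big_nil.
case/andP => p_pr s_pr /andP [p_notin s_uniq]; rewrite !big_cons totient_coprime.
  by rewrite totient_prime // IH.
rewrite prime_coprime // Euclid_dvd_prod // big_has; apply/hasPn => q q_in.
rewrite dvdn_prime2 ?(allP s_pr q q_in) //.
by apply: contraNneq p_notin => ->.
Qed.

Lemma totient_le n : totient n <= n.
Proof.
rewrite totient_count_coprime -[leqRHS]subn0 -[leqRHS]muln1 -sum_nat_const_nat.
by rewrite leq_sum // => d _; exact: leq_b1.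
Qed.

Lemma sum_dvdn_reindex d Y (g : nat -> nat) : 0 < d ->
  \sum_(n < d * Y) (d %| n) * g (n %/ d) = \sum_(t < Y) g t.
Proof.
case: d => // d _; elim: Y => [|Y IH]; first by rewrite muln0 !big_ord0.
rewrite mulnSr big_split_ord /= IH [in RHS]big_ord_recr /=; congr (_ + _).
rewrite big_ord_recl /= addn0 dvdn_mulr // mulKn // mul1n big1 ?addn0 // => j _.
rewrite /bump /= add1n dvdn_addr ?dvdn_mulr //.
have : ~~ (d.+1 %| j.+1).
  apply/negP => /(dvdn_leq (ltn0Sn _)); rewrite ltnS leqNgt.
  by have := ltn_ord j; rewrite /= => ->.
by move/negbTE ->.
Qed.

Lemma partn_of_coprime_quotient M Q d n :
  (forall p, prime p -> p <= M -> p %| Q) -> 1 < Q ->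
  0 < d <= M -> d %| n -> coprime (n %/ d) Q -> n`_\pi(Q) = d.
Proof.
move=> Q_primes Q_gt1 /andP [d_gt0 d_le] d_dvd co_Q.
have n_gt0 : 0 < n.
  by case: n d_dvd co_Q => // _; rewrite div0n /coprime gcd0n gtn_eqF.
have q_gt0 : 0 < n %/ d by rewrite divn_gt0 // dvdn_leq.
rewrite -(divnK d_dvd) partnM // part_p'nat ?mul1n; last first.
  by rewrite -coprime_pi' ?(ltnW Q_gt1) // coprime_sym.
apply: part_pnat_id; apply/andP; split=> //; apply/allP => p.
rewrite !mem_primes => /and3P [p_pr _ p_dvd]; rewrite p_pr ltnW //=.
exact: Q_primes (leq_trans (dvdn_leq d_gt0 p_dvd) d_le).
Qed.

(* Count the products d * t < M`! * Q with 0 < d <= M and t coprime to Q: the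
   factor d of such a product is its \pi(Q)-part, so no product is counted twice. *)
Lemma harmonic_totient_le M Q : 1 < M -> 0 < Q ->
  (forall p, prime p -> p <= M -> p %| Q) ->
  \sum_(s < M) M`! %/ s.+1 * totient Q <= M`! * Q.
Proof.
move=> M_gt1 Q_gt0 Q_primes; set L := M`!.
have Q_gt1 : 1 < Q.
  by rewrite ltn_neqAle eq_sym Q_gt0 andbT; apply: contraTneq (Q_primes 2 isT M_gt1) => ->.
have term (s : 'I_M) :
    L %/ s.+1 * totient Q = \sum_(n < L * Q) (s.+1 %| n) * coprime (n %/ s.+1) Q.
  have s_dvd : s.+1 %| L by rewrite dvdn_fact ?ltn_ord.
  have -> : L * Q = s.+1 * (L %/ s.+1 * Q) by rewrite mulnA [s.+1 * _]mulnC divnK.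
  rewrite (sum_dvdn_reindex _ (fun t => coprime t Q)) //.
  by have := coprime_count_periodic Q (L %/ s.+1) 0; rewrite !addn0 /coprime_count big_ord0 addn0.
rewrite (eq_bigr _ (fun s _ => term s)) exchange_big /=.
rewrite -[leqRHS]card_ord -sum1_card leq_sum // => n _.
rewrite (leq_trans _ (leq_b1 ((n`_\pi(Q)).-1 < M))) // -sum_ord_eqn leq_sum // => s _.
case: (boolP (s.+1 %| n)) => //= s_dvd; case: (boolP (coprime _ _)) => //= co_Q.
by rewrite (@partn_of_coprime_quotient M Q s.+1 n) //= eqxx.
Qed.

Local Open Scope classical_set_scope.
Local Open Scope ring_scope.

Lemma totient_ratio_ge0 (R : realFieldType) Q : 0 <= (totient Q)%:R / Q%:R :> R.
Proof. by rewrite divr_ge0. Qed.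

Lemma totient_ratio_le1 (R : realFieldType) Q : (totient Q)%:R / Q%:R <= 1 :> R.
Proof.
have [-> | Q_gt0] := posnP Q; first by rewrite invr0 mulr0.
by rewrite ler_pdivrMr ?ltr0n // mul1r ler_nat totient_le.
Qed.

Lemma coprime_count_near (R : realFieldType) Q M : (0 < Q)%N ->
  `| (coprime_count Q M)%:R - M%:R * ((totient Q)%:R / Q%:R) | <= Q%:R :> R.
Proof.
move=> Q_gt0; rewrite {1 2}(divn_eq M Q) coprime_count_periodic.
set k := (M %/ Q)%N; set r := (M %% Q)%N; set t : R := _ / _.
have r_lt : (r < Q)%N by rewrite ltn_pmod.
have kt : (k * Q)%:R * t = (k * totient Q)%:R.
  by rewrite /t !natrM; field; rewrite pnatr_eq0 -lt0n.
have cr_le : (coprime_count Q r)%:R <= r%:R :> R by rewrite ler_nat coprime_count_le.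
have rt_le : r%:R * t <= r%:R by rewrite ler_piMr ?totient_ratio_le1.
have rt_ge0 : 0 <= r%:R * t by rewrite mulr_ge0 ?totient_ratio_ge0.
have r_le : r%:R <= Q%:R :> R by rewrite ler_nat ltnW.
have cr_ge0 : 0 <= (coprime_count Q r)%:R :> R by [].
rewrite !natrD mulrDl kt ler_norml; apply/andP; split; lra.
Qed.

Lemma count_fpractical_fQ_near (R : realFieldType) Q N : (0 < Q)%N ->
  `| (count_fpractical (fQ Q) N)%:R - N%:R * (1 - (totient Q)%:R / Q%:R) | <= (Q + 2)%:R :> R.
Proof.
move=> Q_gt0; have := coprime_count_near R N.+1 Q_gt0.
rewrite ler_norml -natr1 mulrDl mul1r => /andP [cc_lower cc_upper].
have /andP [lower upper] := count_fpractical_fQ_bounds Q N.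
rewrite -(ler_nat R) natrD in lower; rewrite -(ler_nat R) -addn2 !natrD in upper.
have t_ge0 := totient_ratio_ge0 R Q; have t_le1 := totient_ratio_le1 R Q.
rewrite natrD mulrBr mulr1 ler_norml; apply/andP; split; lra.
Qed.

Lemma cvg_ratio_of_bounded_error (R : realType) (a : nat -> nat) (d B : R) :
  (forall N, `|(a N)%:R - N%:R * d| <= B) -> (fun N => (a N)%:R / N%:R) @ \oo --> d.
Proof.
move=> a_near; apply/cvgrPdist_le => e e_gt0; near=> N.
have N_gt : B / e < N%:R by near: N; exact: nbhs_infty_gtr.
have B_ge0 : 0 <= B by apply: le_trans (a_near 0%N).
have N_gt0 : 0 < N%:R :> R by apply: le_lt_trans N_gt; rewrite divr_ge0 // ltW.
have -> : d - (a N)%:R / N%:R = - (((a N)%:R - N%:R * d) / N%:R) by field; rewrite gt_eqF.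
rewrite normrN normrM normfV (gtr0_norm N_gt0) ler_pdivrMr //.
by rewrite (le_trans (a_near N)) // mulrC -ler_pdivrMr // ltW.
Unshelve. all: by end_near.
Qed.

Lemma fQ_density (R : realType) Q : (0 < Q)%N ->
  has_fpractical_density (fQ Q) (1 - (totient Q)%:R / Q%:R : R).
Proof.
by move=> Q_gt0; apply: cvg_ratio_of_bounded_error => N; exact: count_fpractical_fQ_near.
Qed.

Section EulerProduct.
Variable R : realFieldType.

Definition euler_prod (s : seq nat) : R := \prod_(p <- s) (1 - p%:R^-1).

Lemma euler_prod_cat s1 s2 : euler_prod (s1 ++ s2) = euler_prod s1 * euler_prod s2.
Proof. exact: big_cat. Qed.

Lemma euler_factor_ge0 p : 0 <= 1 - p%:R^-1 :> R.
Proof. by case: p => [|p]; rewrite ?invr0 ?subr0 // subr_ge0 invf_le1 ?ler1n. Qed.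

Lemma euler_factor_le1 p : 1 - p%:R^-1 <= 1 :> R.
Proof. by rewrite lerBlDr lerDl invr_ge0. Qed.

Lemma euler_prod_ge0 s : 0 <= euler_prod s.
Proof. by apply: prodr_ge0 => p _; exact: euler_factor_ge0. Qed.

Lemma euler_prod_le1 s : euler_prod s <= 1.
Proof. by apply: prodr_ile1 => p _; rewrite euler_factor_ge0 euler_factor_le1. Qed.

Lemma totient_ratio_prod_primes s : all prime s -> uniq s ->
  (totient (\prod_(p <- s) p))%:R / (\prod_(p <- s) p)%:R = euler_prod s.
Proof.
move=> s_pr s_uniq; rewrite totient_prod_primes // !natr_prod -prodf_div.
apply: eq_big_seq => p /(allP s_pr) /prime_gt0 p_gt0.
by rewrite -(prednK p_gt0) /= -natr1; field; rewrite natr1 pnatr_eq0.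
Qed.

Lemma euler_prod_primes_in_step a n :
  euler_prod (primes_in a n) - euler_prod (primes_in a n.+1) <= (a + n)%:R^-1.
Proof.
rewrite primes_inS euler_prod_cat; case: prime; last first.
  by rewrite /euler_prod big_nil mulr1 subrr invr_ge0.
rewrite /euler_prod big_seq1 -/(euler_prod _) mulrBr mulr1 opprB addrC subrK.
by rewrite ler_piMl ?invr_ge0 ?euler_prod_le1.
Qed.

Lemma euler_prod_primes_in1_ge K : (0 < K)%N -> K%:R^-1 <= euler_prod (primes_in 1 K).
Proof.
elim: K => // -[_ | k IH _]; first by rewrite /euler_prod big_nil invr1.
rewrite primes_inS euler_prod_cat add1n.
have last_ge : 1 - k.+2%:R^-1 <= euler_prod (if prime k.+2 then [:: k.+2] else [::]).
  by case: prime; rewrite /euler_prod ?big_seq1 ?big_nil ?euler_factor_le1.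
apply: le_trans (ler_pM _ _ (IH isT) last_ge); rewrite ?invr_ge0 ?euler_factor_ge0 //.
suff -> : k.+1%:R^-1 * (1 - k.+2%:R^-1) = k.+2%:R^-1 :> R by [].
have k_ge0 : 0 <= k%:R :> R by [].
by rewrite -natr1; field; rewrite !gt_eqF //; lra.
Qed.

Lemma euler_prod_harmonic_le1 M :
  (1 < M)%N -> euler_prod (primes_in 1 M) * series (@harmonic R) M <= 1.
Proof.
move=> M_gt1; set s := primes_in 1 M; set Q := (\prod_(p <- s) p)%N; set L := M`!.
have Q_gt0 : (0 < Q)%N := prod_primes_gt0 (primes_in_prime 1 M).
have Q_primes p : prime p -> (p <= M)%N -> (p %| Q)%N.
  move=> p_pr p_le; rewrite Euclid_dvd_prod // big_has; apply/hasP; exists p => //.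
  by rewrite mem_filter p_pr mem_iota prime_gt0 // add1n ltnS.
have := harmonic_totient_le M_gt1 Q_gt0 Q_primes.
rewrite -(ler_nat R) natr_sum natrM.
rewrite -(totient_ratio_prod_primes (primes_in_prime 1 M)) ?primes_in_uniq // -/s -/Q.
have sum_eq : \sum_(i < M) (L %/ i.+1 * totient Q)%:R =
    L%:R * ((totient Q)%:R * series (@harmonic R) M).
  rewrite /series /= big_mkord !mulr_sumr; apply: eq_bigr => i _.
  by rewrite natrM natf_div ?dvdn_fact ?ltn_ord // mulrAC mulrA.
rewrite -/L sum_eq ler_pM2l ?ltr0n ?fact_gt0 // => le_Q.
by rewrite mulrAC ler_pdivrMr ?ltr0n // mul1r.
Qed.

End EulerProduct.

Lemma euler_prod_primes_in_small (R : realType) K z : (0 < K)%N -> 0 < z ->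
  exists i, euler_prod R (primes_in K.+1 i) < z.
Proof.
move=> K_gt0 z_gt0.
have harmonic_oo : series (@harmonic R) @ \oo --> +oo.
  apply: nondecreasing_dvgn_lt (@dvg_harmonic R).
  exact: nondecreasing_series (fun n _ _ => harmonic_ge0 n).
near \oo => M.
have M_ge : (K.+2 <= M)%N by near: M; exact: nbhs_infty_ge.
have H_gt : K%:R / z < series harmonic M by near: M; exact: (proj1 (cvgryPgt _) harmonic_oo).
exists (M - K)%N.
have M_gt1 : (1 < M)%N by rewrite (leq_trans _ M_ge).
have primes_split : primes_in 1 M = primes_in 1 K ++ primes_in K.+1 (M - K).
  by rewrite -add1n -primes_inD subnKC // ltnW // ltnW.
have := euler_prod_harmonic_le1 R M_gt1; rewrite primes_split euler_prod_cat.
set a := euler_prod R (primes_in 1 K); set b := euler_prod R _; set H := series _ _ in H_gt *.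
move=> abH_le1.
have H_gt0 : 0 < H by apply: le_lt_trans H_gt; rewrite divr_ge0 // ltW.
have Ka_ge1 : 1 <= K%:R * a.
  by rewrite -ler_pdivrMl ?ltr0n // mulr1 euler_prod_primes_in1_ge.
rewrite -(ltr_pM2r H_gt0) (@le_lt_trans _ _ K%:R) //; last by rewrite mulrC -ltr_pdivrMr.
apply: le_trans (ler_peMl _ Ka_ge1) _; first by rewrite mulr_ge0 ?euler_prod_ge0 ?ltW.
by rewrite -!mulrA ler_piMr // mulrA.
Unshelve. all: by end_near.
Qed.

Lemma small_steps_approx (R : realFieldType) (u : nat -> R) (y e : R) :
  0 < e -> 0 <= y <= u 0%N -> (forall i, 0 <= u i) -> (forall i, u i - u i.+1 < e) ->
  (forall z, 0 < z -> exists n, u n < z) -> exists i, `|u i - y| < e.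
Proof.
move=> e_gt0 /andP [y_ge0 y_le] u_ge0 u_step u_small.
have [y_lt | e_le] := ltrP y e.
  have [n un_lt] := u_small e e_gt0; have un_ge0 := u_ge0 n.
  by exists n; rewrite ltr_norml; apply/andP; split; lra.
have [n] := u_small y (lt_le_trans e_gt0 e_le).
elim: n => [|n IH un_lt]; first by rewrite ltNge y_le.
have [/IH // | y_le_un] := ltrP (u n) y.
by exists n.+1; have := u_step n; rewrite ltr_norml => ?; apply/andP; split; lra.
Qed.

Theorem theorem1p7 (R : realType) (x : R) (hx0 : 0 <= x) (hx1 : x <= 1)
    (e : R) (he : 0 < e) :
  exists f : nat -> nat, in_classF f /\
    exists delta : R, `|delta - x| < e /\ has_fpractical_density f delta.
Proof.
pose K := (Num.Def.archi_bound e^-1).+1.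
have K_gt : e^-1 < K%:R by rewrite (lt_trans (archi_boundP _)) ?invr_ge0 ?ltW ?ltr_nat.
pose u i := euler_prod R (primes_in K.+1 i).
have u_step i : u i - u i.+1 < e.
  apply: le_lt_trans (euler_prod_primes_in_step _ _ _) _.
  by rewrite invf_plt ?posrE ?ltr0n // (lt_le_trans K_gt) // ler_nat addSn ltnW // ltnS leq_addr.
have [i ui_near] : exists i, `|u i - (1 - x)| < e.
  apply: small_steps_approx => // [|n|z]; last exact: euler_prod_primes_in_small.
    by rewrite /u /euler_prod big_nil subr_ge0 hx1 lerBlDr lerDl.
  exact: euler_prod_ge0.
set Q := (\prod_(p <- primes_in K.+1 i) p)%N.
exists (fQ Q); split; first exact: fQ_in_classF.
exists (1 - (totient Q)%:R / Q%:R); split; last first.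
  exact/fQ_density/prod_primes_gt0/primes_in_prime.
rewrite totient_ratio_prod_primes ?primes_in_prime ?primes_in_uniq // -/(u i).
by rewrite (_ : _ - x = - (u i - (1 - x))) ?normrN //; ring.
Qed.
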